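(* If $T$ is a subcubic tree, then $\gamma(T)=\gamma_{e,f}^*(T)$ if and only if $T$ is $K_{1,3}$.
   Context: All graphs are finite, simple and undirected; subcubic means maximum degree at most $3$; $K_{1,3}$ is the star with three leaves. $\gamma(G)$ is the domination number of $G$ (minimum size of a set $D$ such that every vertex not in $D$ has a neighbor in $D$). The fractional porous exponential domination number $\gamma_{e,f}^*(G)$ is the optimum value of the linear program: minimize $\sum_{u\in V(G)}x(u)$ subject to $\sum_{u\in V(G)}\left(\frac12\right)^{\mathrm{dist}_G(u,v)-1}x(u)\ge 1$ for every $v\in V(G)$ and $x\ge 0$, where $\mathrm{dist}_G$ is the usual distance and $\left(\frac12\right)^\infty=0$. *)

From HB Require Import structures.
From mathcomp Require Import all_boot all_order all_algebra.
Set Implicit Arguments. Unset Strict Implicit. Unset Printing Implicit Defensive.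
Import Order.TTheory GRing.Theory Num.Theory.

Definition simple_graph (T : finType) (e : rel T) : Prop :=
  symmetric e /\ irreflexive e.

Definition subcubic (T : finType) (e : rel T) : Prop :=
  forall x : T, #|[set y | e x y]| <= 3.

Definition connected_graph (T : finType) (e : rel T) : Prop :=
  forall x y : T, connect e x y.

Definition acyclic (T : finType) (e : rel T) : Prop :=
  forall c : seq T, uniq c -> 2 < size c -> ~~ cycle e c.

Definition is_tree (T : finType) (e : rel T) : Prop :=
  0 < #|T| /\ connected_graph e /\ acyclic e.

(* the graph is (isomorphic to) K_{1,3}: 4 vertices, a centre c adjacent
   to exactly the other three, no other edges *)
Definition is_K13 (T : finType) (e : rel T) : Prop :=
  #|T| = 4 /\ exists c : T, forall x y : T, e x y = ((x == c) != (y == c)).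

Definition dominating (T : finType) (e : rel T) (D : {set T}) : bool :=
  [forall x, (x \in D) || [exists y in D, e x y]].

Definition domination_number (T : finType) (e : rel T) : nat :=
  #|[arg min_(D < [set: T] | dominating e D) #|D|]|.

Fixpoint walk (T : finType) (e : rel T) (k : nat) (x y : T) : bool :=
  if k is k'.+1 then [exists z, e x z && walk e k' z y] else x == y.

(* graph distance: Some d if y is reachable from x (shortest walk length d),
   None (= infinity) otherwise; shortest walks have length < #|T| *)
Definition dist (T : finType) (e : rel T) (x y : T) : option nat :=
  let k := find (fun k => walk e k x y) (iota 0 #|T|) in
  if (k < #|T|)%N then Some k else None.

Local Open Scope ring_scope.

Definition pe_weight (R : realFieldType) (T : finType) (e : rel T) (u v : T) : R :=
  match dist e u v with
  | Some d => (2^-1 : R) ^ (d%:Z - 1)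
  | None => 0
  end.

Definition fpe_feasible (R : realFieldType) (T : finType) (e : rel T) (x : T -> R) : Prop :=
  (forall u, 0 <= x u) /\
  (forall v, 1 <= \sum_(u : T) pe_weight R e u v * x u).

Definition is_fpe_domination_number (R : realFieldType) (T : finType) (e : rel T) (r : R) : Prop :=
  (exists x : T -> R, fpe_feasible e x /\ \sum_(u : T) x u = r) /\
  (forall x : T -> R, fpe_feasible e x -> r <= \sum_(u : T) x u).

(* If gamma(T) >= 2, putting weight 1/(1 + 2^-n) on every vertex of a minimum
   dominating set is still feasible: each vertex outside the set receives 1 from a
   dominator and a positive amount from a second member of the set.  Hence
   gamma^* < gamma.  If gamma(T) = 1, a dominating vertex c has at most three
   neighbours.  With at most three vertices all distances are at most 2, and a
   uniform weight shows gamma^* < 1; with four vertices acyclicity forces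
   T = K_{1,3}.  For K_{1,3} the centre alone is feasible, and the dual solution
   1/3 on each leaf shows gamma^* >= 1. *)

From HB Require Import structures.
From mathcomp Require Import all_boot all_order all_algebra.
From mathcomp Require Import ring lra.
Set Implicit Arguments. Unset Strict Implicit. Unset Printing Implicit Defensive.
Import Order.TTheory GRing.Theory Num.Theory.
Local Open Scope ring_scope.

Section Walks.
Variables (T : finType) (e : rel T).

Lemma walk1 u v : walk e 1 u v = e u v.
Proof.
apply/existsP/idP => [[z /andP[e_uz /eqP <-]] // | e_uv].
by exists v; rewrite e_uv eqxx.
Qed.

Lemma path_walk x p : path e x p -> walk e (size p) x (last x p).
Proof.
elim: p x => [|y p IHp] x /=; first by rewrite eqxx.
by case/andP => e_xy path_p; apply/existsP; exists y; rewrite e_xy IHp.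
Qed.

Lemma walk_connect k u v : walk e k u v -> connect e u v.
Proof.
elim: k u => [|k IHk] u /=; first by move/eqP->.
by case/existsP => z /andP[e_uz /IHk]; apply/connect_trans/connect1.
Qed.

Lemma connect_walk u v : connect e u v -> exists2 k, walk e k u v & (k < #|T|)%N.
Proof.
case/connectP => p path_p ->; have [q path_q uniq_q _] := shortenP path_p.
exists (size q); first exact: path_walk.
by have := max_card (mem (u :: q)); rewrite (card_uniqP uniq_q).
Qed.

Lemma dist_walk u v d : dist e u v = Some d -> walk e d u v.
Proof.
rewrite /dist; case: ifP => // lt_find [<-].
have has_walk : has (fun k => walk e k u v) (iota 0 #|T|).
  by rewrite has_find size_iota.
by have := nth_find 0 has_walk; rewrite nth_iota ?size_iota // add0n.
Qed.

Lemma dist_le_walk k u v : walk e k u v -> exists2 d, dist e u v = Some d & (d <= k)%N.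
Proof.
move=> walk_k.
have [k' [walk_k' lt_k'T le_k'k]] :
    exists k', [/\ walk e k' u v, (k' < #|T|)%N & (k' <= k)%N].
  case: (ltnP k #|T|) => [lt_kT | le_Tk]; first by exists k.
  have [k' walk_k' lt_k'T] := connect_walk (walk_connect walk_k).
  by exists k'; split=> //; rewrite ltnW // (leq_trans lt_k'T le_Tk).
rewrite /dist; set p := fun j => walk e j u v.
have le_find : (find p (iota 0 #|T|) <= k')%N.
  rewrite leqNgt; apply/negP => /(before_find 0).
  by rewrite nth_iota // add0n /p walk_k'.
exists (find p (iota 0 #|T|)); last exact: leq_trans le_find le_k'k.
by rewrite (leq_ltn_trans le_find lt_k'T).
Qed.

End Walks.

Lemma half_ge0 {R : numFieldType} : 0 <= (2^-1 : R).
Proof. by rewrite invr_ge0 ler0n. Qed.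

Lemma half_le1 {R : numFieldType} : (2^-1 : R) <= 1.
Proof. by rewrite invf_le1 ?ler1n ?ltr0n. Qed.

Section PeWeight.
Variables (R : realFieldType) (T : finType) (e : rel T).
Local Notation w := (pe_weight R e).

Lemma pe_weight_Some u v d : dist e u v = Some d -> w u v = 2 * 2^-1 ^+ d.
Proof.
rewrite /pe_weight => ->.
have unit_half : (2^-1 : R) \is a GRing.unit by rewrite unitfE invr_eq0 pnatr_eq0.
have := exprzDr unit_half (d%:Z - 1) 1; rewrite subrK expr1z exprnP => ->.
by rewrite mulrCA divff ?mulr1 // pnatr_eq0.
Qed.

Lemma pe_weight_ge0 u v : 0 <= w u v.
Proof.
case dist_uv: (dist e u v) => [d|]; last by rewrite /pe_weight dist_uv.
by rewrite (pe_weight_Some dist_uv) mulr_ge0 ?exprn_ge0 ?half_ge0.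
Qed.

Lemma pe_weight_ge_walk k u v : walk e k u v -> 2 * 2^-1 ^+ k <= w u v.
Proof.
case/dist_le_walk => d /pe_weight_Some -> le_dk.
by rewrite ler_pM2l ?ltr0n // ler_wiXn2l ?half_ge0 ?half_le1.
Qed.

Lemma pe_weight_le_no_walk d u v : (forall k, (k < d)%N -> ~~ walk e k u v) ->
  w u v <= 2 * 2^-1 ^+ d.
Proof.
move=> no_walk; case dist_uv: (dist e u v) => [d'|]; last first.
  by rewrite /pe_weight dist_uv mulr_ge0 ?exprn_ge0 ?half_ge0.
have le_dd' : (d <= d')%N.
  by rewrite leqNgt; apply/negP => /no_walk; rewrite (dist_walk dist_uv).
by rewrite (pe_weight_Some dist_uv) ler_pM2l ?ltr0n // ler_wiXn2l ?half_ge0 ?half_le1.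
Qed.

Lemma pe_weight_le2 u v : w u v <= 2.
Proof. by rewrite -(mulr1 2) -(expr0 (2^-1 : R)) pe_weight_le_no_walk. Qed.

Lemma pe_weight_self v : w v v = 2.
Proof.
apply/le_anti; rewrite pe_weight_le2 /=.
by have := pe_weight_ge_walk (eqxx v : walk e 0 v v); rewrite expr0 mulr1.
Qed.

Lemma pe_weight_le1 u v : u != v -> w u v <= 1.
Proof.
move=> neq_uv; rewrite -(divff (_ : 2 != 0)) ?pnatr_eq0 // -(expr1 (2^-1 : R)).
by apply: pe_weight_le_no_walk => -[|//] _; rewrite /= neq_uv.
Qed.

Lemma pe_weight_le_half u v : u != v -> ~~ e u v -> w u v <= 2^-1.
Proof.
move=> neq_uv not_e_uv.
have -> : (2^-1 : R) = 2 * 2^-1 ^+ 2 by rewrite expr2 mulrA divff ?mul1r ?pnatr_eq0.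
by apply: pe_weight_le_no_walk => -[|[|//]] _; rewrite ?walk1 //= neq_uv.
Qed.

Lemma pe_weight_edge u v : u != v -> e u v -> w u v = 1.
Proof.
move=> neq_uv e_uv; apply/le_anti; rewrite pe_weight_le1 //.
by have := pe_weight_ge_walk (_ : walk e 1 u v); rewrite walk1 expr1 divff ?pnatr_eq0 //; apply.
Qed.

Lemma pe_weight_ge_connect u v : connect e u v -> 2^-1 ^+ #|T| <= w u v.
Proof.
case/connect_walk => k /pe_weight_ge_walk le_w lt_kT; apply: le_trans le_w.
rewrite -[X in X <= _]mul1r ler_pM ?ler1n ?exprn_ge0 ?half_ge0 //.
by rewrite ler_wiXn2l ?half_ge0 ?half_le1 // ltnW.
Qed.

End PeWeight.

Lemma big_mul_indicator (R : pzSemiRingType) (T : finType) (D : {set T}) (a : T -> R) c :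
  \sum_u a u * (if u \in D then c else 0) = (\sum_(u in D) a u) * c.
Proof.
rewrite mulr_suml [RHS]big_mkcond /=; apply: eq_bigr => u _.
by case: ifP; rewrite ?mulr0.
Qed.

Lemma sum_indicator (R : pzSemiRingType) (T : finType) (D : {set T}) (c : R) :
  \sum_u (if u \in D then c else 0) = #|D|%:R * c.
Proof. by rewrite -big_mkcond /= sumr_const mulr_natl. Qed.

Section FractionalDomination.
Variables (R : realFieldType) (T : finType) (e : rel T).
Local Notation w := (pe_weight R e).

Lemma fpe_feasible_indicator (D : {set T}) (c : R) : 0 < c ->
  (forall v, c <= \sum_(u in D) w u v) ->
  fpe_feasible e (fun u => if u \in D then c^-1 else 0).
Proof.
move=> c_gt0 cover; split=> [u | v].
  by case: ifP => _; rewrite ?invr_ge0 ?(ltW c_gt0).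
by rewrite big_mul_indicator ler_pdivlMr // mul1r.
Qed.

Lemma fpe_weak_duality (y x : T -> R) : (forall v, 0 <= y v) ->
  (forall u, \sum_v w u v * y v <= 1) -> fpe_feasible e x -> \sum_v y v <= \sum_u x u.
Proof.
move=> y_ge0 dual [x_ge0 primal].
apply: (@le_trans _ _ (\sum_v (\sum_u w u v * x u) * y v)).
  by apply: ler_sum => v _; rewrite -[X in X <= _]mul1r ler_wpM2r.
rewrite (eq_bigr _ (fun v _ => mulr_suml _ _ _ _)) exchange_big /=.
apply: ler_sum => u _.
have -> : \sum_v w u v * x u * y v = x u * \sum_v w u v * y v.
  by rewrite mulr_sumr; apply: eq_bigr => v _; ring.
by rewrite -[X in _ <= X]mulr1 ler_wpM2l.
Qed.

End FractionalDomination.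

Section Domination.
Variables (T : finType) (e : rel T).

Lemma domination_numberP : exists2 D, dominating e D &
  domination_number e = #|D| /\ forall D', dominating e D' -> (#|D| <= #|D'|)%N.
Proof.
have dom_T : dominating e [set: T] by apply/forallP => x; rewrite in_setT.
rewrite /domination_number.
by case: (arg_minnP (fun D : {set T} => #|D|) dom_T) => D; exists D.
Qed.

Lemma dominating_card_gt0 D : (0 < #|T|)%N -> dominating e D -> (0 < #|D|)%N.
Proof.
case/card_gt0P => x _ /forallP /(_ x) /orP[x_D | /existsP[y /andP[y_D _]]].
  by apply/card_gt0P; exists x.
by apply/card_gt0P; exists y.
Qed.

Lemma dominating_set1P c : reflect (forall x, x != c -> e x c) (dominating e [set c]).
Proof.
apply: (iffP forallP) => [dom x neq_xc | adj x].
  move: (dom x); rewrite in_set1 (negbTE neq_xc) /=.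
  by case/existsP => y /andP[/set1P ->].
rewrite in_set1; case: eqVneq => //= neq_xc.
by apply/existsP; exists c; rewrite in_set1 eqxx adj.
Qed.

Lemma domination_number_set1 c : dominating e [set c] -> domination_number e = 1%N.
Proof.
move=> dom_c; have [D dom_D [-> min_D]] := domination_numberP.
apply/eqP; rewrite eqn_leq -{1}(cards1 c) min_D // dominating_card_gt0 //.
by apply/card_gt0P; exists c.
Qed.

End Domination.

Section Star.
Variables (T : finType) (e : rel T) (c : T).
Hypotheses (sym : symmetric e) (star : forall x, x != c -> e x c).

Lemma star_card_le4 : subcubic e -> (#|T| <= 4)%N.
Proof.
move=> /(_ c) deg_c; rewrite -(prednK (_ : 0 < #|T|)%N); last by apply/card_gt0P; exists c.
rewrite ltnS -(cardC1 c); apply: leq_trans deg_c; apply: subset_leq_card.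
by apply/subsetP => y; rewrite !inE sym => /star.
Qed.

Lemma star_edge : irreflexive e -> acyclic e ->
  forall x y, e x y = ((x == c) != (y == c)).
Proof.
move=> irr acyc x y.
case: (eqVneq x c) => [->|neq_xc]; case: (eqVneq y c) => [->|neq_yc] /=.
- exact: irr.
- by rewrite sym star.
- exact: star.
case: (eqVneq x y) => [->|neq_xy]; first exact: irr.
apply/negbTE/negP => e_xy.
have uniq_cxy : uniq [:: c; x; y] by rewrite /= !inE negb_or !(eq_sym c) neq_xc neq_yc neq_xy.
by have /negP[] := acyc _ uniq_cxy isT; rewrite /= e_xy sym !star.
Qed.

End Star.

Section FpeUpperBounds.
Variables (R : realFieldType) (T : finType) (e : rel T).
Hypothesis sym : symmetric e.
Local Notation w := (pe_weight R e).

Lemma dominating_coverage (D : {set T}) : connected_graph e -> dominating e D ->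
  (1 < #|D|)%N -> forall v, 1 + 2^-1 ^+ #|T| <= \sum_(u in D) w u v.
Proof.
move=> conn /forallP dom D_gt1 v.
have [v_D | v_notD] := boolP (v \in D).
  have le2 : 1 + 2^-1 ^+ #|T| <= (2 : R).
    by rewrite [2]mulr2n lerD2l exprn_ile1 ?half_ge0 ?half_le1.
  rewrite (bigD1 v) //= pe_weight_self (le_trans le2) // ler_wpDr // sumr_ge0 // => u _.
  exact: pe_weight_ge0.
have /existsP[z /andP[z_D e_vz]] : [exists y in D, e v y].
  by move: (dom v); rewrite (negbTE v_notD).
have /card_gt0P[u u_Dz] : (0 < #|D :\ z|)%N by rewrite (cardsD1 z D) z_D in D_gt1.
move: u_Dz; rewrite in_setD1 => /andP[neq_uz u_D].
rewrite (bigD1 z) //= (bigD1 u) /=; last by rewrite u_D neq_uz.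
have neq_zv : z != v by apply: contraNneq v_notD => <-.
rewrite pe_weight_edge 1?sym //.
rewrite lerD2l; apply: le_trans (pe_weight_ge_connect R (conn u v)) _.
by rewrite ler_wpDr // sumr_ge0 // => ? _; apply: pe_weight_ge0.
Qed.

Lemma fpe_lt_dominating_card (D : {set T}) : connected_graph e -> dominating e D ->
  (1 < #|D|)%N -> exists x : T -> R, fpe_feasible e x /\ \sum_u x u < #|D|%:R.
Proof.
move=> conn dom_D D_gt1; set m : R := 1 + 2^-1 ^+ #|T|.
have m_gt1 : 1 < m by rewrite ltrDl exprn_gt0 // invr_gt0 ltr0n.
have m_gt0 : 0 < m := lt_trans ltr01 m_gt1.
exists (fun u => if u \in D then m^-1 else 0); split.
  exact: fpe_feasible_indicator (dominating_coverage conn dom_D D_gt1).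
by rewrite sum_indicator -[X in _ < X]mulr1 ltr_pM2l ?invf_lt1 // ltr0n ltnW.
Qed.

Variable c : T.
Hypothesis star : forall x, x != c -> e x c.

Lemma pe_weight_ge_half_star u v : 2^-1 <= w u v.
Proof.
have [<- | neq_uv] := eqVneq u v; first by rewrite pe_weight_self (le_trans half_le1) // ler1n.
have [e_uv | not_e_uv] := boolP (e u v); first by rewrite pe_weight_edge // half_le1.
have neq_uc : u != c.
  apply: contraNneq not_e_uv => eq_uc; rewrite eq_uc sym star //.
  by rewrite -eq_uc eq_sym.
have neq_vc : v != c by apply: contraNneq not_e_uv => ->; apply: star.
have walk_uv : walk e 2 u v.
  by apply/existsP; exists c; rewrite star //; apply/existsP; exists v; rewrite sym star ?eqxx.
have := pe_weight_ge_walk R walk_uv.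
by rewrite expr2 mulrA divff ?mul1r ?pnatr_eq0.
Qed.

Lemma star_coverage : (1 < #|T|)%N -> forall v, (#|T|%:R + 4) / 2 <= \sum_u w u v.
Proof.
move=> T_gt1 v.
have [z neq_zv e_zv] : exists2 z, z != v & e z v.
  have [-> | neq_vc] := eqVneq v c; last by exists c; rewrite 1?eq_sym // sym star.
  have /card_gt0P[z] : (0 < #|predC1 c|)%N by rewrite cardC1 -ltnS prednK // ltnW.
  by rewrite !inE => neq_zc; exists z; rewrite ?star.
have -> : \sum_u w u v = \sum_(u : T) 2^-1 + \sum_u (w u v - 2^-1).
  by rewrite -big_split /=; apply: eq_bigr => u _; rewrite addrC subrK.
rewrite sumr_const (bigD1 v) //= (bigD1 z) //= pe_weight_self pe_weight_edge //.
have rest_ge0 : 0 <= \sum_(u | (u != v) && (u != z)) (w u v - 2^-1).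
  by apply: sumr_ge0 => u _; rewrite subr_ge0 pe_weight_ge_half_star.
rewrite -mulr_natl; lra.
Qed.

Lemma fpe_lt1_small_star : (#|T| <= 3)%N ->
  exists x : T -> R, fpe_feasible e x /\ \sum_u x u < 1.
Proof.
move=> T_le3.
suff [s T_lt_s cover] : exists2 s : R, #|T|%:R < s & forall v, s <= \sum_u w u v.
  have s_gt0 : 0 < s by apply: le_lt_trans T_lt_s.
  exists (fun u => if u \in [set: T] then s^-1 else 0); split.
    by apply: fpe_feasible_indicator => // v; under eq_bigl do rewrite in_setT.
  by rewrite sum_indicator cardsT ltr_pdivrMr // mul1r.
have [T1 | T_ne1] := eqVneq #|T| 1%N.
  exists 2; first by rewrite T1 ltr_nat.
  move=> v; rewrite (bigD1 v) //= pe_weight_self ler_wpDr // sumr_ge0 // => u _.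
  exact: pe_weight_ge0.
exists ((#|T|%:R + 4) / 2); last first.
  by apply: star_coverage; rewrite ltn_neqAle eq_sym T_ne1; apply/card_gt0P; exists c.
have : (#|T|%:R : R) <= 3 by rewrite ler_nat.
rewrite ltr_pdivlMr ?ltr0n //; lra.
Qed.

End FpeUpperBounds.

Section K13.
Variables (R : realFieldType) (T : finType) (e : rel T) (c : T).
Hypotheses (card_T : #|T| = 4%N) (edge_c : forall x y, e x y = ((x == c) != (y == c))).
Local Notation w := (pe_weight R e).

Lemma K13_leaf_weight_sum u : \sum_(v in [set~ c]) w u v <= 3.
Proof.
have card_leaves : #|[set~ c]| = 3%N by rewrite cardsC1 card_T.
have [-> | neq_uc] := eqVneq u c.
  apply: le_trans (_ : \sum_(v in [set~ c]) (1 : R) <= _); last first.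
    by rewrite sumr_const card_leaves.
  by apply: ler_sum => v; rewrite !inE eq_sym; apply: pe_weight_le1.
have card_rest : #|[set~ c] :\ u| = 2%N.
  by move: (cardsD1 u [set~ c]); rewrite !inE neq_uc card_leaves => -[].
rewrite (big_setD1 u) ?inE // pe_weight_self.
apply: le_trans (_ : 2 + \sum_(v in [set~ c] :\ u) (2^-1 : R) <= _); last first.
  by rewrite sumr_const card_rest mulr2n; lra.
rewrite lerD2l; apply: ler_sum => v; rewrite !inE => /andP[neq_vu neq_vc].
by apply: pe_weight_le_half; rewrite 1?eq_sym // edge_c (negbTE neq_uc) (negbTE neq_vc).
Qed.

Lemma K13_domination_number : domination_number e = 1%N.
Proof.
apply: (domination_number_set1 (c := c)); apply/dominating_set1P => x neq_xc.
by rewrite edge_c eqxx (negbTE neq_xc).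
Qed.

Lemma K13_fpe_domination_number : is_fpe_domination_number e (1 : R).
Proof.
split.
  exists (fun u => if u \in [set c] then 1^-1 else 0); split.
    apply: fpe_feasible_indicator => [|v]; first exact: ltr01.
    rewrite big_set1; have [-> | neq_vc] := eqVneq v c.
      by rewrite pe_weight_self ler1n.
    by rewrite pe_weight_edge 1?eq_sym // edge_c eqxx (negbTE neq_vc).
  by rewrite sum_indicator cards1 invr1 mulr1.
move=> x feas_x.
pose y v : R := if v \in [set~ c] then 3^-1 else 0.
apply: le_trans (fpe_weak_duality (y := y) _ _ feas_x).
- by rewrite sum_indicator cardsC1 card_T divff // pnatr_eq0.
- by move=> v; rewrite /y; case: ifP; rewrite ?invr_ge0 ?ler0n.
- by move=> u; rewrite big_mul_indicator ler_pdivrMr ?ltr0n // mul1r K13_leaf_weight_sum.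
Qed.

End K13.

Theorem mainTheorem5 (R : realFieldType) (T : finType) (e : rel T) :
  simple_graph e -> is_tree e -> subcubic e ->
  (is_fpe_domination_number e ((domination_number e)%:R : R) <-> is_K13 e).
Proof.
move=> [sym irr] [T_gt0 [conn acyc]] subcubic_e.
split=> [[_ gamma_le_fpe] | [card_T [c edge_c]]]; last first.
  by rewrite (K13_domination_number edge_c); apply: K13_fpe_domination_number.
have [D dom_D [gammaE _]] := domination_numberP e.
have no_cheaper (x : T -> R) : fpe_feasible e x -> ~ \sum_u x u < (domination_number e)%:R.
  by move=> feas_x; apply/negP; rewrite -leNgt; apply: gamma_le_fpe.
have /cards1P[c D_c] : #|D| == 1%N.
  rewrite eqn_leq (dominating_card_gt0 T_gt0 dom_D) andbT leqNgt; apply/negP => D_gt1.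
  have [x [feas_x]] := fpe_lt_dominating_card R sym conn dom_D D_gt1.
  by rewrite -gammaE; apply: no_cheaper.
move: dom_D; rewrite D_c => /dominating_set1P star_c.
rewrite gammaE D_c cards1 in no_cheaper.
have T_gt3 : (3 < #|T|)%N.
  rewrite ltnNge; apply/negP => T_le3.
  have [x [feas_x]] := fpe_lt1_small_star R sym star_c T_le3.
  exact: no_cheaper.
split; first by apply/eqP; rewrite eqn_leq (star_card_le4 sym star_c subcubic_e).
by exists c; apply: star_edge.
Qed.
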